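(* Let $\mathcal{T}$ be a periodic Cartesian mesh of the two-dimensional torus with $N_x\times N_y=N$ rectangular cells $c_{i,j}$, where cell $c_{i,j}$ has midpoint $(m^x_{i,j},m^y_{i,j})$ and side lengths $L^x_{i,j}$, $L^y_{i,j}$. Let $V$ be the space of vector fields $\mathbf{u}$ such that on each cell $c_{i,j}$, $$\mathbf{u}|_{c_{i,j}}\in\operatorname{span}\left\{\begin{pmatrix}1\\0\end{pmatrix},\ \begin{pmatrix}0\\1\end{pmatrix},\ \begin{pmatrix}\frac{2}{L^x_{i,j}}(m^x_{i,j}-x)\\ \frac{2}{L^y_{i,j}}(y-m^y_{i,j})\end{pmatrix}\right\}.$$ Then the subspace of $V$ of fields satisfying $[\![\mathbf{u}\cdot\mathbf{n}_f]\!]=0$ for every face $f$ of the mesh has dimension $N+1$.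
   Context: Each face $f$ carries a fixed unit normal $\mathbf{n}_f$; the cell into which $\mathbf{n}_f$ points is the right cell $R$, the other the left cell $L$, and $[\![\mathbf{u}\cdot\mathbf{n}_f]\!]=\mathbf{u}_R\cdot\mathbf{n}_f-\mathbf{u}_L\cdot\mathbf{n}_f$ (traces from each side along $f$). *)

From HB Require Import structures.
From mathcomp Require Import all_boot all_order all_algebra.
Set Implicit Arguments. Unset Strict Implicit. Unset Printing Implicit Defensive.
Import Order.TTheory GRing.Theory Num.Theory.
Local Open Scope ring_scope.

(* Periodic Cartesian mesh of the 2-torus: Nx columns of widths hx i and
   Ny rows of heights hy j; cell c_{i,j} = [xnode i, xnode i + hx i] x
   [ynode j, ynode j + hy j], so L^x_{i,j} = hx i and L^y_{i,j} = hy j.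
   The torus is [0, sum hx) x [0, sum hy) with periodic identification;
   the neighbour of column i to the right is column (ordS i) = (i+1) mod Nx. *)

Definition node (R : realFieldType) (n : nat) (h : 'I_n -> R) (i : 'I_n) : R :=
  \sum_(k < n | (k < i)%N) h k.

Definition mid (R : realFieldType) (n : nat) (h : 'I_n -> R) (i : 'I_n) : R :=
  node h i + h i / 2.

(* An element of V is given by its three coefficients on each cell, w.r.t.
   the cellwise spanning set (1,0), (0,1),
   ((2/L^x)(m^x - x), (2/L^y)(y - m^y)). *)
Definition Vcoef (R : realFieldType) (Nx Ny : nat) :=
  {ffun 'I_Nx * 'I_Ny -> 'rV[R]_3}.

Definition field_on_cell (R : realFieldType) (Nx Ny : nat)
  (hx : 'I_Nx -> R) (hy : 'I_Ny -> R) (u : Vcoef R Nx Ny)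
  (i : 'I_Nx) (j : 'I_Ny) (p : R * R) : R * R :=
  let c := u (i, j) in
  (c 0 0 + c 0 2 * (2 / hx i * (mid hx i - p.1)),
   c 0 1 + c 0 2 * (2 / hy j * (p.2 - mid hy j))).

(* Vertical face between c_{i,j} (left, L) and c_{i+1,j} (right, R), with
   n_f = (1,0): it is {x_{i+1}} x [ynode j, ynode j + hy j], located at
   x = xnode i + hx i seen from L and x = xnode (i+1 mod Nx) seen from R
   (periodic identification).  Horizontal faces similarly with n_f = (0,1). *)
Definition normal_jump_free (R : realFieldType) (Nx Ny : nat)
  (hx : 'I_Nx -> R) (hy : 'I_Ny -> R) (u : Vcoef R Nx Ny) : Prop :=
  (forall (i : 'I_Nx) (j : 'I_Ny) (y : R),
      node hy j <= y <= node hy j + hy j ->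
      (field_on_cell hx hy u (ordS i) j (node hx (ordS i), y)).1
      - (field_on_cell hx hy u i j (node hx i + hx i, y)).1 = 0)
  /\
  (forall (i : 'I_Nx) (j : 'I_Ny) (x : R),
      node hx i <= x <= node hx i + hx i ->
      (field_on_cell hx hy u i (ordS j) (x, node hy (ordS j))).2
      - (field_on_cell hx hy u i j (x, node hy j + hy j)).2 = 0).

(* Encode V by the coefficients a, b, s ([xcoef], [ycoef], [strain]) of each
   cell on the three spanning fields.  Across a vertical face the normal jump
   is a' + s' - a + s, across a horizontal one b' - s' - b - s: 2N linear
   conditions on 3N unknowns.  Summing all of them, the a- and b-terms
   telescope around the torus and the s-terms cancel, so the conditions have
   rank at most 2N - 1 and the kernel has dimension at least N + 1.
   Conversely, summing the vertical (horizontal) conditions along a row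
   (column) shows that s has zero row and column sums; with s = 0 the
   conditions say that a is constant along rows and b along columns.  Hence a
   jump-free field is determined by s off the last row and column together
   with a on one column and b on one row, i.e. by
   (Nx-1)(Ny-1) + Ny + Nx = N + 1 numbers. *)

From HB Require Import structures.
From mathcomp Require Import all_boot all_order all_algebra.
From mathcomp Require Import ring lra zify.
Set Implicit Arguments. Unset Strict Implicit. Unset Printing Implicit Defensive.
Import Order.TTheory GRing.Theory Num.Theory.
Local Open Scope ring_scope.

Lemma dim_ffun (K : fieldType) (I : finType) (V : vectType K) :
  dim {ffun I -> V} = (#|I| * dim V)%N.
Proof. by []. Qed.

Lemma dim_pair (K : fieldType) (U V : vectType K) :
  dim (U * V)%type = (dim U + dim V)%N.
Proof. by []. Qed.

Lemma dim_regular (K : fieldType) : dim K^o = 1%N.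
Proof. by []. Qed.

Lemma dim_lker_gt (K : fieldType) (U V W : vectType K)
    (f : 'Hom(U, V)) (h : 'Hom(V, W)) (v : V) :
  (limg f <= lker h)%VS -> h v != 0 -> (dim U < \dim (lker f) + dim V)%N.
Proof.
move=> fh hv; have := limg_ker_dim f fullv; have := limg_ker_dim h fullv.
rewrite !capfv !dimvf; have := dimvS fh.
have : (0 < \dim (limg h))%N.
  rewrite lt0n dimv_eq0; apply: contraNneq hv => h0.
  by rewrite -memv0 -h0 memv_img ?memvf.
lia.
Qed.

Lemma dim_lker_le (K : fieldType) (U V W : vectType K)
    (f : 'Hom(U, V)) (g : 'Hom(U, W)) :
  (forall u, f u = 0 -> g u = 0 -> u = 0) -> (\dim (lker f) <= dim W)%N.
Proof.
move=> fg; rewrite -(limg_dim_eq (f := g)) -?dimvf ?dimvS ?subvf //.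
apply/eqP; rewrite -subv0; apply/subvP => u /memv_capP[].
by rewrite !memv_ker memv0 => /eqP fu /eqP gu; apply/eqP/fg.
Qed.

Lemma sumr_inj_sub (V : zmodType) (I : finType) (s : I -> I) (g : I -> V) :
  injective s -> \sum_i (g (s i) - g i) = 0.
Proof. by move=> s_inj; rewrite sumrB [X in _ - X](reindex_inj s_inj) subrr. Qed.

Lemma ordS_invariant (T : Type) (n : nat) (g : 'I_n.+1 -> T) :
  (forall i, g (ordS i) = g i) -> forall i, g i = g ord0.
Proof.
move=> gS i; rewrite -(inord_val i); elim: (val i) (ltn_ord i) => [|k IH] ltk.
  by congr g; apply/val_inj; rewrite /= inordK.
have -> : inord k.+1 = ordS (inord k : 'I_n.+1).
  by apply/val_inj; rewrite /= !inordK ?modn_small //; lia.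
by rewrite gS IH //; lia.
Qed.

Lemma sum_widen_eq0 (V : zmodType) (n : nat) (g : 'I_n.+1 -> V) :
  \sum_i g i = 0 -> (forall i : 'I_n, g (widen_ord (leqnSn n) i) = 0) ->
  forall i, g i = 0.
Proof.
move=> sum0 g0 i; have glast : g ord_max = 0.
  by move: sum0; rewrite big_ord_recr /= big1 ?add0r.
case: (ltnP i n) => [lt_in | le_ni].
  by rewrite -(g0 (Ordinal lt_in)); congr g; apply/val_inj.
by rewrite -glast; congr g; apply/val_inj => /=; have := ltn_ord i; lia.
Qed.

Local Notation xcoef u p := (u p 0 0).
Local Notation ycoef u p := (u p 0 1).
Local Notation strain u p := (u p 0 2).

Section NormalJumps.

Variables (R : realFieldType) (Nx Ny : nat).
Implicit Types (u : Vcoef R Nx Ny) (p : 'I_Nx * 'I_Ny).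

(* The third spanning field has x-component +1 / -1 on the left / right edge
   of its cell, and y-component -1 / +1 on the bottom / top edge. *)
Definition xjump u p : R :=
  xcoef u (ordS p.1, p.2) + strain u (ordS p.1, p.2) - xcoef u p + strain u p.

Definition yjump u p : R :=
  ycoef u (p.1, ordS p.2) - strain u (p.1, ordS p.2) - ycoef u p - strain u p.

Definition jump u : {ffun 'I_Nx * 'I_Ny -> R^o} * {ffun 'I_Nx * 'I_Ny -> R^o} :=
  ([ffun p => xjump u p], [ffun p => yjump u p]).

Lemma jump_is_linear : linear jump.
Proof.
move=> a u v; congr (_, _); apply/ffunP => p;
  by rewrite !ffunE /xjump /yjump !ffunE !mxE /GRing.scale /=; ring.
Qed.

HB.instance Definition _ := GRing.isLinear.Build R _ _ _ jump jump_is_linear.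

Lemma jump0P u :
  jump u = 0 <-> (forall p, xjump u p = 0) /\ (forall p, yjump u p = 0).
Proof.
split=> [[/ffunP xj /ffunP yj] | [xj yj]].
  by split=> p; [have := xj p | have := yj p]; rewrite !ffunE.
by congr (_, _); apply/ffunP => p; rewrite !ffunE.
Qed.

Lemma sum_xjump_row u j : \sum_i xjump u (i, j) = 2 * \sum_i strain u (i, j).
Proof.
pose g i := xcoef u (i, j) + strain u (i, j).
rewrite -[RHS]add0r -[X in X + _](sumr_inj_sub g (@ordS_inj _)).
rewrite mulr_sumr -big_split.
by apply: eq_bigr => i _; rewrite /xjump /g /=; ring.
Qed.

Lemma sum_yjump_column u i : \sum_j yjump u (i, j) = - (2 * \sum_j strain u (i, j)).
Proof.
pose g j := ycoef u (i, j) - strain u (i, j).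
rewrite -[RHS]add0r -[X in X + _](sumr_inj_sub g (@ordS_inj _)).
rewrite mulr_sumr -sumrN -big_split.
by apply: eq_bigr => j _; rewrite /yjump /g /=; ring.
Qed.

Definition face_sum
    (w : {ffun 'I_Nx * 'I_Ny -> R^o} * {ffun 'I_Nx * 'I_Ny -> R^o}) : R^o :=
  \sum_p w.1 p + \sum_p w.2 p.

Lemma face_sum_is_linear : linear face_sum.
Proof.
have sumZD a (f g : {ffun 'I_Nx * 'I_Ny -> R^o}) :
    \sum_p (a *: f + g) p = a * \sum_p f p + \sum_p g p.
  by rewrite mulr_sumr -big_split; apply: eq_bigr => p _; rewrite !ffunE.
by move=> a w w'; rewrite /face_sum /= !sumZD /GRing.scale /=; ring.
Qed.

HB.instance Definition _ := GRing.isLinear.Build R _ _ _ face_sum face_sum_is_linear.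

Lemma face_sum_ones : face_sum ([ffun=> 1], 0) = #|{: 'I_Nx * 'I_Ny}|%:R.
Proof.
rewrite /face_sum /= [X in _ + X]big1 ?addr0 => [|p _]; rewrite ?ffunE //.
by under eq_bigr do rewrite ffunE; rewrite sumr_const.
Qed.

Lemma face_sum_jump u : face_sum (jump u) = 0.
Proof.
rewrite /face_sum /=; under eq_bigr do rewrite ffunE.
under [X in _ + X]eq_bigr do rewrite ffunE.
have sum_pairs (F : 'I_Nx * 'I_Ny -> R) : \sum_p F p = \sum_i \sum_j F (i, j).
  by rewrite pair_bigA; apply: eq_bigr => -[].
rewrite !sum_pairs exchange_big /=.
under eq_bigr do rewrite sum_xjump_row.
under [X in _ + X]eq_bigr do rewrite sum_yjump_column.
by rewrite sumrN -!mulr_sumr exchange_big subrr.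
Qed.

Lemma mid_sub_node (n : nat) (h : 'I_n -> R) i : mid h i - node h i = h i / 2.
Proof. by rewrite /mid addrAC subrr add0r. Qed.

Lemma mid_sub_end (n : nat) (h : 'I_n -> R) i :
  mid h i - (node h i + h i) = - (h i / 2).
Proof. by rewrite /mid; field. Qed.

Lemma half_scaled (h : R) : h != 0 -> 2 / h * (h / 2) = 1.
Proof. by move=> h0; field. Qed.

Section Traces.

Variables (hx : 'I_Nx -> R) (hy : 'I_Ny -> R).
Hypotheses (hx_gt0 : forall i, 0 < hx i) (hy_gt0 : forall j, 0 < hy j).

Lemma vertical_face_jump u i j y :
  (field_on_cell hx hy u (ordS i) j (node hx (ordS i), y)).1
  - (field_on_cell hx hy u i j (node hx i + hx i, y)).1 = xjump u (i, j).
Proof.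
rewrite /field_on_cell /= mid_sub_node mid_sub_end mulrN !half_scaled ?gt_eqF //.
by rewrite /xjump; ring.
Qed.

Lemma horizontal_face_jump u i j x :
  (field_on_cell hx hy u i (ordS j) (x, node hy (ordS j))).2
  - (field_on_cell hx hy u i j (x, node hy j + hy j)).2 = yjump u (i, j).
Proof.
rewrite /field_on_cell /= -[node hy (ordS j) - _]opprB -[node hy j + _ - _]opprB.
by rewrite mid_sub_node mid_sub_end opprK mulrN !half_scaled ?gt_eqF // /yjump; ring.
Qed.

Lemma normal_jump_freeE u : normal_jump_free hx hy u <-> jump u = 0.
Proof.
rewrite jump0P /normal_jump_free.
split=> [[xj yj] | [xj yj]]; last first.
  by split=> i j z _; rewrite ?vertical_face_jump ?horizontal_face_jump.
split=> -[i j].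
  by rewrite -(vertical_face_jump u i j (node hy j)) xj // lexx lerDl ltW.
by rewrite -(horizontal_face_jump u i j (node hx i)) yj // lexx lerDl ltW.
Qed.

End Traces.

End NormalJumps.

Section Coordinates.

Variables (R : realFieldType) (nx ny : nat).
Implicit Types u : Vcoef R nx.+1 ny.+1.

Local Notation widen := (widen_ord (leqnSn _)).

Definition jump_free_coords u :
    {ffun 'I_nx * 'I_ny -> R^o} * {ffun 'I_ny.+1 -> R^o} * {ffun 'I_nx.+1 -> R^o} :=
  ([ffun p => strain u (widen p.1, widen p.2)],
   [ffun j => xcoef u (ord0, j)], [ffun i => ycoef u (i, ord0)]).

Lemma jump_free_coords_is_linear : linear jump_free_coords.
Proof. by move=> a u v; congr (_, _, _); apply/ffunP => p; rewrite !ffunE !mxE. Qed.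

HB.instance Definition _ :=
  GRing.isLinear.Build R _ _ _ jump_free_coords jump_free_coords_is_linear.

Lemma jump_free_coords_inj u : jump u = 0 -> jump_free_coords u = 0 -> u = 0.
Proof.
move=> /jump0P[xj yj] [[/ffunP strain_low /ffunP xcoef0] /ffunP ycoef0].
have row_sum0 j : \sum_i strain u (i, j) = 0.
  by have := sum_xjump_row u j; rewrite big1 //; lra.
have column_sum0 i : \sum_j strain u (i, j) = 0.
  by have := sum_yjump_column u i; rewrite big1 //; lra.
have strain0 p : strain u p = 0.
  have low_rows i (j : 'I_ny) : strain u (i, widen j) = 0.
    apply: (sum_widen_eq0 (g := fun i => strain u (i, widen j))) i => // i.
    by have := strain_low (i, j); rewrite !ffunE.
  by case: p => i j; apply: (sum_widen_eq0 (g := fun j => strain u (i, j))).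
have xcoefS i j : xcoef u (ordS i, j) = xcoef u (i, j).
  by have := xj (i, j); rewrite /xjump !strain0 /=; lra.
have ycoefS i j : ycoef u (i, ordS j) = ycoef u (i, j).
  by have := yj (i, j); rewrite /yjump !strain0 /=; lra.
apply/ffunP => -[i j]; apply/matrixP => r k; rewrite !ffunE mxE (ord1 r).
have [->|[->|->]] : k = 0 \/ k = 1 \/ k = 2.
  by case: k => [[|[|[|//]]] ?]; [left | right; left | right; right]; apply/val_inj.
- rewrite (ordS_invariant (g := fun i => xcoef u (i, j))) //.
  by have := xcoef0 j; rewrite !ffunE.
- rewrite (ordS_invariant (g := fun j => ycoef u (i, j))) //.
  by have := ycoef0 i; rewrite !ffunE.
- exact: strain0.
Qed.

End Coordinates.

Theorem proposition15 (R : realFieldType) (Nx Ny : nat)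
  (hx : 'I_Nx -> R) (hy : 'I_Ny -> R) :
  (0 < Nx)%N -> (0 < Ny)%N ->
  (forall i, 0 < hx i) -> (forall j, 0 < hy j) ->
  exists W : {vspace Vcoef R Nx Ny},
    (forall u : Vcoef R Nx Ny, u \in W <-> normal_jump_free hx hy u) /\
    \dim W = (Nx * Ny).+1.
Proof.
case: Nx hx => [//|nx] hx; case: Ny hy => [//|ny] hy _ _ hx_gt0 hy_gt0.
exists (lker (linfun (@jump R nx.+1 ny.+1))); split.
  move=> u; rewrite memv_ker lfunE (normal_jump_freeE hx_gt0 hy_gt0).
  by split=> /eqP.
apply/eqP; rewrite eqn_leq; apply/andP; split.
  apply: leq_trans (dim_lker_le (g := linfun (@jump_free_coords R nx ny)) _) _.
    by move=> u; rewrite !lfunE; apply: jump_free_coords_inj.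
  by rewrite !dim_pair !dim_ffun dim_regular !card_prod !card_ord; lia.
have jump_in_ker : (limg (linfun (@jump R nx.+1 ny.+1))
                     <= lker (linfun (@face_sum R nx.+1 ny.+1)))%VS.
  apply/subvP => w /memv_imgP[u _ ->].
  by rewrite memv_ker !lfunE; apply/eqP/face_sum_jump.
have face_sum_neq0 : linfun (@face_sum R nx.+1 ny.+1) ([ffun=> 1], 0) != 0.
  by rewrite lfunE /= face_sum_ones pnatr_eq0 card_prod !card_ord.
move: (dim_lker_gt jump_in_ker face_sum_neq0).
rewrite !dim_pair !dim_ffun dim_matrix mul1r dim_regular card_prod !card_ord.
(* [set] merges the two convertible but syntactically distinct copies of the
   kernel dimension, which [lia] would treat as different atoms. *)
set k := \dim (lker _); lia.
Qed.
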